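(* Let $(S,\circ)$ be a right loop and let $L$ be the congruence on $S$ generated by $\{(x,\,x\theta^S f^S(y,z)) : x,y,z\in S\}\cup\{(x\circ y,\,y\circ x): x,y\in S\}$. Then $L$ is the smallest congruence on $S$ such that the quotient right loop $S/L$ is an abelian group.
   Context: A right loop is a set $S$ with a binary operation $\circ$ and an element $1$ such that $1\circ x=x\circ 1=x$ for all $x$, and for all $a,b\in S$ the equation $X\circ a=b$ has a unique solution in $S$. A congruence on $S$ is an equivalence relation on $S$ which is a right subloop of $S\times S$ (componentwise operation); for a congruence $R$ with class $T=R_1$ of $1$, the classes are $T\circ x$ and $S/R=\{T\circ x\}$ is a right loop with $(T\circ x)\circ(T\circ y)=T\circ(x\circ y)$. For $y,z\in S$, $f^S(y,z):S\to S$ sends $x$ to the unique $X\in S$ with $X\circ(y\circ z)=(x\circ y)\circ z$. $G_S$ is the subgroup of $\mathrm{Sym}(S)$ generated by all $f^S(y,z)$, and $x\theta^S h:=h(x)$ for $h\in G_S$. *)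

From Stdlib Require Import Classical.

Section RightLoops.
Variables (S : Type) (op : S -> S -> S) (one : S).

Definition right_loop : Prop :=
  (forall x, op one x = x) /\ (forall x, op x one = x) /\
  (forall a b, exists! X, op X a = b).

(* A congruence: an equivalence relation that is a right subloop of S x S
   (componentwise operation): contains (1,1), closed under the operation,
   and closed under the unique solution of (X,X') o (a,a') = (b,b'). *)
Definition congruence (R : S -> S -> Prop) : Prop :=
  (forall x, R x x) /\
  (forall x y, R x y -> R y x) /\
  (forall x y z, R x y -> R y z -> R x z) /\
  R one one /\
  (forall a a' b b', R a a' -> R b b' -> R (op a b) (op a' b')) /\
  (forall a a' b b' X X', R a a' -> R b b' ->
      op X a = b -> op X' a' = b' -> R X X').

(* The quotient right loop S/R, with classes T o x and
   (T o x) o (T o y) = T o (x o y), is an abelian group.  Equality of the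
   classes of u and v is R u v; the identity class is that of one. *)
Definition quotient_abelian_group (R : S -> S -> Prop) : Prop :=
  (forall x y z, R (op (op x y) z) (op x (op y z))) /\
  (forall x, R (op one x) x /\ R (op x one) x) /\
  (forall x, exists y, R (op y x) one /\ R (op x y) one) /\
  (forall x y, R (op x y) (op y x)).

(* The congruence L generated by the pairs (x, x theta f^S(y,z)), where
   x theta f^S(y,z) is the unique X with X o (y o z) = (x o y) o z,
   together with the pairs (x o y, y o x). *)
Definition gen_congruence_L (a b : S) : Prop :=
  forall R : S -> S -> Prop, congruence R ->
    (forall x y z X, op X (op y z) = op (op x y) z -> R x X) ->
    (forall x y, R (op x y) (op y x)) ->
    R a b.

End RightLoops.
Arguments right_loop {S}.
Arguments congruence {S}.
Arguments quotient_abelian_group {S}.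
Arguments gen_congruence_L {S}.


(* The theorem reduces to two facts.
   1. An intersection of congruences is a congruence, so L (the
      intersection of all congruences containing both families) is the
      least congruence containing them.
   2. For a congruence R of a right loop, R contains both families exactly
      when S/R is an abelian group: the first family says that S/R is
      associative, the second that it is commutative, and in a commutative
      quotient the left inverse given by right division is also a right
      inverse.
   Together: L is a congruence, S/L is an abelian group since L contains
   its generators, and any congruence with abelian quotient contains the
   generators, hence contains L. *)

Section RightLoopCongruences.
Variables (S : Type) (op : S -> S -> S) (one : S).

Definition theta_closed (R : S -> S -> Prop) : Prop :=
  forall x y z X, op X (op y z) = op (op x y) z -> R x X.

Definition comm_closed (R : S -> S -> Prop) : Prop :=
  forall x y, R (op x y) (op y x).

Lemma congruence_intersection (P Q : (S -> S -> Prop) -> Prop) :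
  congruence op one
    (fun a b => forall R, congruence op one R -> P R -> Q R -> R a b).
Proof.
  repeat split.
  - intros x R [Rrefl _] _ _; apply Rrefl.
  - intros x y Hxy R HR HP HQ.
    pose proof HR as [_ [Rsym _]]; apply Rsym, Hxy; assumption.
  - intros x y z Hxy Hyz R HR HP HQ.
    pose proof HR as [_ [_ [Rtrans _]]].
    apply Rtrans with y; [apply Hxy | apply Hyz]; assumption.
  - intros R [_ [_ [_ [Rone _]]]] _ _; exact Rone.
  - intros a a' b b' Ha Hb R HR HP HQ.
    pose proof HR as [_ [_ [_ [_ [Rop _]]]]].
    apply Rop; [apply Ha | apply Hb]; assumption.
  - intros a a' b b' X X' Ha Hb EX EX' R HR HP HQ.
    pose proof HR as [_ [_ [_ [_ [_ Rdiv]]]]].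
    apply (Rdiv a a' b b'); [apply Ha | apply Hb | exact EX | exact EX'];
      assumption.
Qed.

Lemma gen_congruence_L_congruence :
  congruence op one (gen_congruence_L op one).
Proof. exact (congruence_intersection theta_closed comm_closed). Qed.

Lemma gen_congruence_L_theta_closed : theta_closed (gen_congruence_L op one).
Proof. intros x y z X E R _ Htheta _; exact (Htheta x y z X E). Qed.

Lemma gen_congruence_L_comm_closed : comm_closed (gen_congruence_L op one).
Proof. intros x y R _ _ Hcomm; apply Hcomm. Qed.

Lemma gen_congruence_L_least (R : S -> S -> Prop) :
  congruence op one R -> theta_closed R -> comm_closed R ->
  forall a b, gen_congruence_L op one a b -> R a b.
Proof. intros HR Htheta Hcomm a b HL; exact (HL R HR Htheta Hcomm). Qed.

(* If S/R is associative then R contains the pairs (x, x theta f(y,z)):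
   for X with X o (y o z) = (x o y) o z, this element is
   congruent to x o (y o z), and cancelling y o z (closure under right
   division) gives R x X. *)
Lemma assoc_theta_closed (R : S -> S -> Prop) :
  congruence op one R ->
  (forall x y z, R (op (op x y) z) (op x (op y z))) ->
  theta_closed R.
Proof.
  intros [Rrefl [Rsym [_ [_ [_ Rdiv]]]]] Hassoc x y z X E.
  apply (Rdiv (op y z) (op y z) (op x (op y z)) (op X (op y z)));
    [apply Rrefl | | reflexivity | reflexivity].
  rewrite E; apply Rsym, Hassoc.
Qed.

Hypothesis HS : right_loop op one.

(* Conversely, in a right loop the pairs (x, x theta f(y,z)) make S/R
   associative: (x o y) o z = X o (y o z) with X congruent to x. *)
Lemma theta_closed_assoc (R : S -> S -> Prop) :
  congruence op one R -> theta_closed R ->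
  forall x y z, R (op (op x y) z) (op x (op y z)).
Proof.
  intros [Rrefl [Rsym [_ [_ [Rop _]]]]] Htheta x y z.
  destruct HS as [_ [_ Hdiv]].
  destruct (Hdiv (op y z) (op (op x y) z)) as [X [EX _]].
  rewrite <- EX.
  apply Rop; [apply Rsym, (Htheta x y z X EX) | apply Rrefl].
Qed.

(* In a commutative quotient, the solution y of y o x = 1 is a two-sided
   inverse of x modulo R. *)
Lemma comm_closed_inverse (R : S -> S -> Prop) :
  congruence op one R -> comm_closed R ->
  forall x, exists y, R (op y x) one /\ R (op x y) one.
Proof.
  intros [Rrefl [_ [Rtrans _]]] Hcomm x.
  destruct HS as [_ [_ Hdiv]].
  destruct (Hdiv x one) as [y [Ey _]].
  exists y; rewrite Ey; split; [apply Rrefl |].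
  apply Rtrans with (op y x); [apply Hcomm | rewrite Ey; apply Rrefl].
Qed.

Lemma quotient_abelian_of_closed (R : S -> S -> Prop) :
  congruence op one R -> theta_closed R -> comm_closed R ->
  quotient_abelian_group op one R.
Proof.
  intros HR Htheta Hcomm.
  pose proof HR as [Rrefl _].
  destruct HS as [H1l [H1r _]].
  split; [exact (theta_closed_assoc R HR Htheta) |].
  split; [intros x; rewrite H1l, H1r; split; apply Rrefl |].
  split; [exact (comm_closed_inverse R HR Hcomm) | exact Hcomm].
Qed.

End RightLoopCongruences.

Theorem mainTheorem6 (S : Type) (op : S -> S -> S) (one : S)
  (HS : right_loop op one) :
  congruence op one (gen_congruence_L op one) /\
  quotient_abelian_group op one (gen_congruence_L op one) /\
  (forall R : S -> S -> Prop, congruence op one R ->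
     quotient_abelian_group op one R ->
     forall a b, gen_congruence_L op one a b -> R a b).
Proof.
  split; [apply gen_congruence_L_congruence |].
  split.
  - apply quotient_abelian_of_closed; [exact HS |
      apply gen_congruence_L_congruence |
      apply gen_congruence_L_theta_closed |
      apply gen_congruence_L_comm_closed].
  - intros R HR [Hassoc [_ [_ Hcomm]]].
    apply gen_congruence_L_least; [exact HR | | exact Hcomm].
    exact (assoc_theta_closed S op one R HR Hassoc).
Qed.
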